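(* Let $q$ be a power of an odd prime $p$ with $q>5$, let $3\le h\le k$ be integers, let $$D_3=\Bigl\{(x_1,\ldots,x_k)\in\mathbb{F}_q^k\setminus\{0\}:\prod_{i=1}^h x_i\prod_{1\le i<j\le h}(x_i+x_j)=0\Bigr\},$$ and $n=\#D_3$. Then the minimum nonzero weight of $\mathrm{C}_{D_3}$ is $n-q^{k-1}+1$, and it is attained exactly by the codewords associated with the hyperplanes $x_i+x_j=0$ ($1\le i<j\le h$) and $x_i=0$ ($1\le i\le h$).
   Context: For a finite ordered set $D=\{P_1,\ldots,P_n\}\subseteq\mathbb{F}_q^k$, $\mathrm{C}_D=\{c_f=(f(P_1),\ldots,f(P_n)):f:\mathbb{F}_q^k\to\mathbb{F}_q\text{ linear}\}$; the codewords associated with a hyperplane through the origin are the $c_f$ with $f$ a linear form defining it. Weights are Hamming weights. *)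

From HB Require Import structures.
From mathcomp Require Import all_boot all_order all_algebra all_field.
Set Implicit Arguments. Unset Strict Implicit. Unset Printing Implicit Defensive.
Import GRing.Theory.
Local Open Scope ring_scope.

(* The defining set D_3 in F_q^k (row vectors, coordinates indexed 0..k-1;
   the paper's coordinates 1..h are our indices 0..h-1). *)
Definition D3 (F : finFieldType) (k h : nat) : {set 'rV[F]_k} :=
  [set x : 'rV[F]_k | (x != 0) &&
     ((\prod_(i < k | (i < h)%N) x 0 i) *
      (\prod_(i < k) \prod_(j < k | ((i < j) && (j < h))%N) (x 0 i + x 0 j))
      == 0)].

(* Hamming weight of the codeword c_f = (f(P))_{P in D}; it does not depend
   on the ordering of D. *)
Definition cw_weight (F : finFieldType) (k : nat) (D : {set 'rV[F]_k})
  (f : 'rV[F]_k -> F) : nat :=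
  #|[set P in D | f P != 0]|.

Definition defines_sum_hyperplane (F : finFieldType) (k : nat)
  (f : 'rV[F]_k -> F) (i j : 'I_k) : Prop :=
  forall x : 'rV[F]_k, f x = 0 <-> x 0 i + x 0 j = 0.

Definition defines_coord_hyperplane (F : finFieldType) (k : nat)
  (f : 'rV[F]_k -> F) (i : 'I_k) : Prop :=
  forall x : 'rV[F]_k, f x = 0 <-> x 0 i = 0.

From HB Require Import structures.
From mathcomp Require Import all_boot all_order all_algebra all_field.
From mathcomp Require Import ring zify.
Set Implicit Arguments. Unset Strict Implicit. Unset Printing Implicit Defensive.
Import GRing.Theory.
Local Open Scope ring_scope.

(* Let K be the kernel of a nonzero functional f. The codeword c_f vanishes on
   D_3 exactly at D_3 ∩ K, which lies in K \ {0}, a set of q^(k-1) - 1 vectors;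
   so wt(c_f) >= n - q^(k-1) + 1, with equality iff K \ {0} ⊆ D_3.
   Conversely, if K \ {0} ⊆ D_3, no vector of K can have its first h coordinates
   in a set T ⊆ F with 0 ∉ T + T, since such a vector avoids D_3. Writing
   a_m = f(e_m), kernel vectors of this shape, with entries 1 except for one,
   two or three coordinates, exist unless the support of a is contained in
   {1..h}, carries a single value, and has at most two elements: the free
   entry s must avoid at most five roots of affine constraints, which q > 5
   allows. *)

Definition D3_hyperplane (F : finFieldType) k h (f : 'rV[F]_k -> F) : Prop :=
  (exists i j : 'I_k, [/\ (i < j)%N, (j < h)%N & defines_sum_hyperplane f i j]) \/
  (exists i : 'I_k, (i < h)%N /\ defines_coord_hyperplane f i).

Lemma pchar_odd_two_neq0 (R : nzRingType) p :
  p \in [pchar R] -> odd p -> 2%:R != 0 :> R.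
Proof.
move=> charR p_odd; rewrite -(dvdn_pcharf charR) dvdn_prime2 ?(pcharf_prime charR) //.
by apply: contraTN p_odd => /eqP->.
Qed.

Lemma exists_notin (T : finType) (s : seq T) :
  (size s < #|T|)%N -> exists x, x \notin s.
Proof.
move=> small; apply/existsP; rewrite -negb_forall.
apply: contraTN small => /forallP s_full.
rewrite -leqNgt (leq_trans _ (card_size s)) // subset_leq_card //.
by apply/subsetP => x _; apply: s_full.
Qed.

Lemma exists_avoid_roots (F : finFieldType) (l : seq (F * F)) :
  (size l < #|F|)%N -> all (fun ab => ab.1 != 0) l ->
  exists s, all (fun ab => ab.1 * s + ab.2 != 0) l.
Proof.
move=> small /allP l_nz.
have [s s_notin] : exists s, s \notin [seq - ab.2 / ab.1 | ab <- l].
  by apply: exists_notin; rewrite size_map.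
exists s; apply/allP => -[a b] ab_in /=; apply: contraNneq s_notin => root_s.
apply/mapP; exists (a, b) => //=; have a_nz := l_nz _ ab_in.
by move/eqP: root_s; rewrite addrC addr_eq0 => /eqP->; field.
Qed.

Lemma linear_rowE (F : fieldType) k (f : {linear 'rV[F]_k -> F^o}) x :
  f x = \sum_(m < k) x 0 m * f 'e_m.
Proof.
by rewrite {1}(row_sum_delta x) linear_sum; apply: eq_bigr => m _; rewrite linearZ.
Qed.

Lemma card_kernel (F : finFieldType) k (f : {linear 'rV[F]_k -> F^o}) v :
  f v != 0 -> #|[set x | f x == 0]| = (#|F| ^ k.-1)%N.
Proof.
move=> fv_nz; set g := linfun f.
have -> : [set x | f x == 0] = [set x in lker g].
  by apply/setP => x; rewrite !inE memv_ker lfunE.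
have dim_img : \dim (g @: fullv) = 1%N.
  apply/eqP; rewrite eqn_leq; apply/andP; split.
    by have := dimvS (subvf (g @: fullv)); rewrite dimvf.
  rewrite lt0n dimv_eq0; apply: contraNneq fv_nz => img0.
  by rewrite -memv0 -img0 -lfunE memv_img ?memvf.
have := limg_ker_dim g fullv; rewrite capfv dimvf /dim /= mul1n dim_img addn1.
by rewrite cardsE card_vspace => /(congr1 predn) /= ->.
Qed.

Section MinimumWeight.

Variables (F : finFieldType) (k : nat) (D : {set 'rV[F]_k}).
Variables (f : {linear 'rV[F]_k -> F^o}) (v : 'rV[F]_k).
Hypotheses (D_nz : 0 \notin D) (fv_nz : f v != 0).

Let K := [set x | f x == 0].

Let expq_gt0 : (0 < #|F| ^ k.-1)%N.
Proof. by rewrite expn_gt0 (cardD1 0). Qed.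

Lemma cw_weight_kernel : (cw_weight D f + #|D :&: K| = #|D|)%N.
Proof.
rewrite addnC -(cardsID K D); congr (_ + _)%N.
by apply/eq_card => x; rewrite !inE andbC.
Qed.

Lemma card_D_kernel :
  (#|D :&: K| <= (#|F| ^ k.-1).-1 ?= iff (K :\ 0%R \subset D))%N.
Proof.
have K0 : 0 \in K by rewrite inE linear0.
have -> : (#|F| ^ k.-1).-1%N = #|K :\ 0|.
  by rewrite -(card_kernel fv_nz) (cardsD1 0 K) K0.
have sub : D :&: K \subset K :\ 0.
  apply/subsetP => x; rewrite !inE => /andP[xD ->]; rewrite andbT.
  by apply: contraNneq D_nz => <-.
by rewrite -[_ \subset D]andbT -(subsetDl K [set 0]) -subsetI; apply: subset_leqif_card.
Qed.

Lemma cw_weight_ge : (#|D| + 1 - #|F| ^ k.-1 <= cw_weight D f)%N.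
Proof.
have := cw_weight_kernel; have := expq_gt0; have [le_d _] := card_D_kernel.
lia.
Qed.

Lemma cw_weight_eqP : (0 < cw_weight D f)%N ->
  cw_weight D f = (#|D| + 1 - #|F| ^ k.-1)%N <-> K :\ 0 \subset D.
Proof.
have := cw_weight_kernel; have := expq_gt0; have [le_d /esym eq_d] := card_D_kernel.
move=> w_gt0; rewrite eq_d; split => [w_eq | /eqP d_eq]; last by lia.
by apply/eqP; lia.
Qed.

End MinimumWeight.

Section TestVectors.

Variables (F : finFieldType) (k h : nat).

Definition set_coord (x : 'rV[F]_k) (i : 'I_k) (c : F) : 'rV[F]_k :=
  x + (c - x 0 i) *: 'e_i.

Lemma set_coordE (x : 'rV[F]_k) (i : 'I_k) c (m : 'I_k) :
  set_coord x i c 0 m = if m == i then c else x 0 m.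
Proof.
by rewrite !mxE eqxx /=; case: eqP => [->|_]; rewrite ?mulr1 ?mulr0 ?addr0 // addrC subrK.
Qed.

Lemma linear_set_coord (f : {linear 'rV[F]_k -> F^o}) x (i : 'I_k) c :
  f (set_coord x i c) = f x + (c - x 0 i) * f 'e_i.
Proof. by rewrite linearD linearZ. Qed.

Definition coords_in (T : seq F) (x : 'rV[F]_k) :=
  forall i : 'I_k, (i < h)%N -> x 0 i \in T.

Lemma coords_in_const T c : c \in T -> coords_in T (const_mx c).
Proof. by move=> cT i _; rewrite mxE. Qed.

Lemma coords_in_set_coord T (x : 'rV[F]_k) (i : 'I_k) c :
  coords_in T x -> ((i < h)%N -> c \in T) -> coords_in T (set_coord x i c).
Proof.
move=> xT cT m m_lt_h; rewrite set_coordE.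
by have [m_eq_i | _] := eqVneq m i; [apply: cT; rewrite -m_eq_i | apply: xT].
Qed.

Definition zero_sum_free (T : seq F) := {in T &, forall a b, a + b != 0}.

Lemma zero_sum_free3 a b c : 2%:R != 0 :> F ->
  a != 0 -> b != 0 -> c != 0 -> a + b != 0 -> a + c != 0 -> b + c != 0 ->
  zero_sum_free [:: a; b; c].
Proof.
move=> two_nz a_nz b_nz c_nz ab ac bc.
have double_nz (t : F) : t != 0 -> t + t != 0.
  by move=> t_nz; rewrite -mulr2n -mulr_natl mulf_neq0.
move=> x y; rewrite !inE => /or3P[] /eqP-> /or3P[] /eqP->;
  by rewrite ?double_nz // addrC.
Qed.

Lemma D3_nz : 0 \notin D3 F k h.
Proof. by rewrite inE eqxx. Qed.

Lemma notin_D3 T (x : 'rV[F]_k) : zero_sum_free T -> coords_in T x -> x \notin D3 F k h.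
Proof.
move=> T_free xT; rewrite inE negb_and orbC mulf_neq0 //.
  apply/prodf_neq0 => i i_lt_h; have xi_in := xT i i_lt_h.
  by apply: contraTneq (T_free _ _ xi_in xi_in) => ->; rewrite addr0 negbK.
apply/prodf_neq0 => i _; apply/prodf_neq0 => j /andP[ij j_lt_h].
by apply: T_free; apply: xT => //; apply: ltn_trans ij j_lt_h.
Qed.

Lemma mem_D3_coord (x : 'rV[F]_k) (i : 'I_k) :
  (i < h)%N -> x 0 i = 0 -> x != 0 -> x \in D3 F k h.
Proof. by move=> i_lt_h xi x_nz; rewrite inE x_nz (bigD1 i) //= xi !mul0r. Qed.

Lemma mem_D3_sum (x : 'rV[F]_k) (i j : 'I_k) :
  (i < j)%N -> (j < h)%N -> x 0 i + x 0 j = 0 -> x != 0 -> x \in D3 F k h.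
Proof.
move=> ij j_lt_h xij x_nz; rewrite inE x_nz /=.
rewrite [X in _ * X](bigD1 i) //= [X in _ * (X * _)](bigD1 j) /= ?ij ?j_lt_h //.
by rewrite xij mul0r mul0r mulr0.
Qed.

Lemma delta_mem_D3 (i l : 'I_k) : (l < h)%N -> l != i -> 'e_i \in D3 F k h.
Proof.
move=> l_lt_h li; apply: (mem_D3_coord l_lt_h); first by rewrite mxE (negbTE li).
by apply: contra_neq (@oner_neq0 F) => /rowP/(_ i); rewrite !mxE !eqxx.
Qed.

End TestVectors.

Section KernelInD3.

Variables (F : finFieldType) (k h : nat) (f : {linear 'rV[F]_k -> F^o}).
Hypotheses (two_nz : 2%:R != 0 :> F) (card_F_gt5 : (5 < #|F|)%N).
Hypotheses (h_gt0 : (0 < h)%N) (h_le_k : (h <= k)%N).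
Hypothesis kerf_sub_D3 : [set x | f x == 0] :\ 0 \subset D3 F k h.

Let one : 'rV[F]_k := const_mx 1.

Lemma zero_sum_free_linear_neq0 T x : zero_sum_free T -> coords_in h T x -> f x != 0.
Proof.
move=> T_free xT; apply: contraTneq (notin_D3 T_free xT) => fx0; rewrite negbK.
apply: (subsetP kerf_sub_D3); rewrite !inE fx0 eqxx andbT.
pose i0 : 'I_k := Ordinal (leq_trans h_gt0 h_le_k).
have x0_in := xT i0 h_gt0.
apply: contraTneq (T_free _ _ x0_in x0_in) => ->; by rewrite mxE addr0 eqxx.
Qed.

Lemma coef_nz_lt_h m : f 'e_m != 0 -> (m < h)%N.
Proof.
move=> am_nz; rewrite ltnNge; apply/negP => h_le_m.
pose x := set_coord one m (1 - f one / f 'e_m).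
have fx0 : f x = 0 by rewrite linear_set_coord mxE; field.
suff : f x != 0 by rewrite fx0 eqxx.
apply: (@zero_sum_free_linear_neq0 [:: 1]).
  by move=> a b; rewrite !inE => /eqP-> /eqP->.
apply: coords_in_set_coord; first exact: coords_in_const (mem_head _ _).
by rewrite ltnNge h_le_m.
Qed.

Lemma coef_nz_eq i j : f 'e_i != 0 -> f 'e_j != 0 -> f 'e_i = f 'e_j.
Proof.
move=> ai_nz aj_nz; apply/eqP/negP => /negP ai_neq_aj.
have ij : j != i by apply: contraNneq ai_neq_aj => ->.
set al : F := - f 'e_j / f 'e_i; set be : F := 1 - (f one - f 'e_j) / f 'e_i.
have al_nz : al != 0 by rewrite mulf_neq0 ?oppr_eq0 ?invr_eq0.
have al1_nz : al + 1 != 0.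
  have -> : al + 1 = (f 'e_i - f 'e_j) / f 'e_i by rewrite /al; field.
  by rewrite mulf_neq0 ?subr_eq0 ?invr_eq0.
(* u := al * s + be puts the vector x below in the kernel; the list holds
   s, 1 + s, u, 1 + u and u + s as affine forms in s. *)
have [s] : exists s, all (fun ab => ab.1 * s + ab.2 != 0)
    [:: (1, 0); (1, 1); (al, be); (al, 1 + be); (al + 1, be)].
  by apply: exists_avoid_roots => //=; rewrite ?oner_neq0 al_nz al1_nz.
rewrite /= !mul1r addr0 andbT => /and5P[s_nz s1_nz u_nz u1_nz us_nz].
set u := al * s + be; pose x := set_coord (set_coord one i u) j s.
have fx0 : f x = 0.
  by rewrite !linear_set_coord set_coordE (negbTE ij) !mxE /u /al /be; field.
suff : f x != 0 by rewrite fx0 eqxx.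
apply: (@zero_sum_free_linear_neq0 [:: 1; u; s]).
  apply: zero_sum_free3; rewrite ?oner_neq0 //.
  - by rewrite /u addrCA.
  - by rewrite addrC.
  - by have -> : u + s = (al + 1) * s + be by rewrite /u; ring.
do 2 (apply: coords_in_set_coord; last by rewrite !inE eqxx !orbT).
exact: coords_in_const (mem_head _ _).
Qed.

Lemma coef_nz_no_three i j l : i != j -> i != l -> j != l ->
  f 'e_i != 0 -> f 'e_j != 0 -> f 'e_l != 0 -> False.
Proof.
move=> ij il jl ai_nz aj_nz al_nz.
set r : F := 3%:R - f one / f 'e_i.
(* v := r - 2 s puts the vector x below in the kernel; the list holds
   s, 1 + s, v, 1 + v and s + v as affine forms in s. *)
have [s] : exists s, all (fun ab => ab.1 * s + ab.2 != 0)
    [:: (1, 0); (1, 1); (- 2%:R, r); (- 2%:R, 1 + r); (-1, r)].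
  by apply: exists_avoid_roots => //=; rewrite !oppr_eq0 oner_neq0 two_nz.
rewrite /= !mul1r addr0 andbT => /and5P[s_nz s1_nz v_nz v1_nz sv_nz].
set v := - 2%:R * s + r; pose x := set_coord (set_coord (set_coord one i s) j s) l v.
have fx0 : f x = 0.
  rewrite !linear_set_coord !set_coordE ![_ == i]eq_sym [l == j]eq_sym.
  rewrite (negbTE ij) (negbTE il) (negbTE jl) !mxE.
  by rewrite (coef_nz_eq aj_nz ai_nz) (coef_nz_eq al_nz ai_nz) /v /r; field.
suff : f x != 0 by rewrite fx0 eqxx.
apply: (@zero_sum_free_linear_neq0 [:: 1; s; v]).
  apply: zero_sum_free3; rewrite ?oner_neq0 //.
  - by rewrite addrC.
  - by rewrite /v addrCA.
  - by have -> : s + v = -1 * s + r by rewrite /v; ring.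
do 3 (apply: coords_in_set_coord; last by rewrite !inE eqxx !orbT).
exact: coords_in_const (mem_head _ _).
Qed.

Lemma kernel_in_D3_hyperplane v : f v != 0 -> D3_hyperplane h f.
Proof.
move=> fv_nz; have [i ai_nz] : exists i, f 'e_i != 0.
  apply/existsP; apply: contraNT fv_nz; rewrite negb_exists => /forallP a0.
  by rewrite linear_rowE big1 // => m _; move/negPn/eqP: (a0 m) ->; rewrite mulr0.
have scaled_zero (y : F) : f 'e_i * y = 0 <-> y = 0.
  by split=> [/eqP|->]; rewrite ?mulr0 // mulf_eq0 (negbTE ai_nz) => /eqP.
have [j /andP[ji aj_nz] | a_supp] := pickP (fun j => (j != i) && (f 'e_j != 0)).
  have fE x : f x = f 'e_i * (x 0 i + x 0 j).
    rewrite linear_rowE (bigD1 i) //= (bigD1 j) /= ?ji // big1 ?addr0.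
      by rewrite (coef_nz_eq aj_nz ai_nz) mulrDr ![f 'e_i * _]mulrC.
    move=> m /andP[mi mj]; have [-> | am_nz] := eqVneq (f 'e_m) 0; first by rewrite mulr0.
    by case: (coef_nz_no_three _ _ _ ai_nz aj_nz am_nz); rewrite eq_sym.
  left; have [ij | ji' | /val_inj ij] := ltngtP i j.
  - exists i, j; split; [done | exact: coef_nz_lt_h aj_nz |].
    by move=> x; rewrite fE; apply: scaled_zero.
  - exists j, i; split; [done | exact: coef_nz_lt_h ai_nz |].
    by move=> x; rewrite fE addrC; apply: scaled_zero.
  - by rewrite ij eqxx in ji.
have fE x : f x = f 'e_i * x 0 i.
  rewrite linear_rowE (bigD1 i) //= big1 ?addr0 1?mulrC // => m mi.
  by move: (a_supp m); rewrite mi /= => /negbFE/eqP->; rewrite mulr0.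
right; exists i; split; first exact: coef_nz_lt_h ai_nz.
by move=> x; rewrite fE; apply: scaled_zero.
Qed.

End KernelInD3.

Section HyperplaneWeight.

Variables (F : finFieldType) (k h : nat) (f : {linear 'rV[F]_k -> F^o}).
Hypotheses (h_gt1 : (1 < h)%N) (h_le_k : (h <= k)%N).

Lemma hyperplane_kernel_sub_D3 :
  D3_hyperplane h f -> [set x | f x == 0] :\ 0 \subset D3 F k h.
Proof.
move=> hyp; apply/subsetP => x /setD1P[x_nz]; rewrite inE => /eqP fx0.
case: hyp => [[i [j [ij j_lt_h fE]]] | [i [i_lt_h fE]]].
  by apply: mem_D3_sum ij j_lt_h _ x_nz; apply/fE.
by apply: mem_D3_coord i_lt_h _ x_nz; apply/fE.
Qed.

Lemma hyperplane_cw_weight_gt0 : D3_hyperplane h f -> (0 < cw_weight (D3 F k h) f)%N.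
Proof.
move=> hyp; have delta_diag (i : 'I_k) : ('e_i : 'rV[F]_k) 0 i = 1 by rewrite mxE !eqxx.
suff [i /andP[eD fe_nz]] : exists i : 'I_k, ('e_i \in D3 F k h) && (f 'e_i != 0).
  by rewrite /cw_weight; apply/card_gt0P; exists 'e_i; rewrite inE eD.
case: hyp => [[i [j [ij j_lt_h fE]]] | [i [i_lt_h fE]]].
  exists j; rewrite (delta_mem_D3 F (l := i)) ?(ltn_trans ij) -?val_eqE ?ltn_eqF //=.
  apply/eqP => /fE; rewrite delta_diag mxE eqxx -val_eqE (ltn_eqF ij) add0r.
  by apply/eqP/oner_neq0.
have [l l_lt_h li] : exists2 l : 'I_k, (l < h)%N & l != i.
  have [i0 | i_gt0] := posnP i.
    by exists (Ordinal (leq_trans h_gt1 h_le_k)); rewrite // -val_eqE /= i0.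
  exists (Ordinal (leq_trans (ltnW h_gt1) h_le_k)); first exact: ltnW.
  by rewrite -val_eqE /= eq_sym -lt0n.
exists i; rewrite (delta_mem_D3 F l_lt_h li) /=.
by apply/eqP => /fE; rewrite delta_diag; apply/eqP/oner_neq0.
Qed.

End HyperplaneWeight.

Theorem proposition4p2 (F : finFieldType) (p : nat) (k h : nat)
  (pprime : prime p) (podd : odd p) (charF : p \in [pchar F])
  (q_gt5 : (5 < #|F|)%N) (h_ge3 : (3 <= h)%N) (h_le_k : (h <= k)%N) :
  let n := #|D3 F k h| in
  let m := (n + 1 - #|F| ^ k.-1)%N in
  (forall f : {linear 'rV[F]_k -> F^o},
      (0 < cw_weight (D3 F k h) f)%N -> (m <= cw_weight (D3 F k h) f)%N) /\
  (forall f : {linear 'rV[F]_k -> F^o},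
      ((0 < cw_weight (D3 F k h) f)%N /\ cw_weight (D3 F k h) f = m) <->
      ((exists i j : 'I_k, [/\ (i < j)%N, (j < h)%N &
                            defines_sum_hyperplane f i j]) \/
       (exists i : 'I_k, (i < h)%N /\ defines_coord_hyperplane f i))).
Proof.
move=> n m; have two_nz := pchar_odd_two_neq0 charF podd.
have h_gt1 : (1 < h)%N by apply: leq_trans h_ge3.
have D_nz := D3_nz F k h.
have nz_value f : (0 < cw_weight (D3 F k h) f)%N -> exists v, f v != 0.
  by rewrite /cw_weight => /card_gt0P[v /setIdP[_ fv_nz]]; exists v.
split=> [f /nz_value[v fv_nz] | f]; first exact: cw_weight_ge D_nz fv_nz.
split=> [[w_gt0 w_eq] | hyp].
  have [v fv_nz] := nz_value f w_gt0.
  apply: (kernel_in_D3_hyperplane two_nz q_gt5 (ltnW h_gt1) h_le_k _ fv_nz).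
  exact/(cw_weight_eqP D_nz fv_nz w_gt0).
have w_gt0 := hyperplane_cw_weight_gt0 h_gt1 h_le_k hyp.
have [v fv_nz] := nz_value f w_gt0.
by split; last apply/(cw_weight_eqP D_nz fv_nz w_gt0)/hyperplane_kernel_sub_D3.
Qed.
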